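(* For every even positive integer $n$, letting $\frac{n}{2}\cdot K_2$ denote the perfect matching on $n$ vertices (the disjoint union of $n/2$ edges), $$\chi_{2K_2}\!\left(\tfrac{n}{2}\cdot K_2\right) = \left\lceil \sqrt{n + \tfrac14} + \tfrac12 \right\rceil.$$
   Context: All graphs are finite and simple. For a fixed bipartite graph $H$, a proper vertex coloring of a graph $G$ is called an $H$-avoiding coloring if for any two color classes, the subgraph of $G$ induced by their union contains no induced subgraph isomorphic to $H$. $\chi_H(G)$ denotes the minimum number of colors in an $H$-avoiding coloring of $G$. $2K_2$ is the disjoint union of two edges. *)

From HB Require Import structures.
From mathcomp Require Import all_boot all_order all_algebra.
From mathcomp Require Import reals.
Set Implicit Arguments. Unset Strict Implicit. Unset Printing Implicit Defensive.
Import Order.TTheory GRing.Theory Num.Theory.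

Definition has_induced_copy (W V : finType) (H : rel W) (G : rel V)
  (S : pred V) : Prop :=
  exists f : W -> V,
    injective f /\ (forall w, S (f w)) /\ (forall x y, G (f x) (f y) = H x y).

Definition proper_coloring (V : finType) (G : rel V) (k : nat) (c : V -> 'I_k)
  : Prop := forall x y, G x y -> c x != c y.

Definition H_avoiding_coloring (W V : finType) (H : rel W) (G : rel V)
  (k : nat) (c : V -> 'I_k) : Prop :=
  proper_coloring G c /\
  forall c1 c2 : 'I_k,
    ~ has_induced_copy H G (fun v => (c v == c1) || (c v == c2)).

Definition chi_H_is (W V : finType) (H : rel W) (G : rel V) (k : nat) : Prop :=
  (exists c : V -> 'I_k, H_avoiding_coloring H G c) /\
  (forall j, (exists c : V -> 'I_j, H_avoiding_coloring H G c) -> k <= j).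

Definition twoK2 : rel 'I_4 :=
  fun x y => (x != y) && ((val x)./2 == (val y)./2).

(* The perfect matching (n/2) K_2 on 'I_n : edges {2i, 2i+1}. *)
Definition matching_graph (n : nat) : rel 'I_n :=
  fun x y => (x != y) && ((val x)./2 == (val y)./2).
Arguments matching_graph n : clear implicits.

From HB Require Import structures.
From mathcomp Require Import all_boot all_order all_algebra.
From mathcomp Require Import reals.
Import Order.TTheory GRing.Theory Num.Theory.
From mathcomp Require Import zify lra.

Set Implicit Arguments.
Unset Strict Implicit.
Unset Printing Implicit Defensive.

(* The 2K_2-avoiding chromatic number of the perfect matching on n vertices
   is the least k with n <= k(k-1).

   Write p(v) for the partner of the vertex v in the matching.
   - Lower bound: in a 2K_2-avoiding colouring c with j colours, the map
     v |-> (c v, c (p v)) is injective into the off-diagonal pairs of colours.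
     Indeed, two vertices v, w with the same ordered pair are not partners
     (the colouring is proper), so v, p v, w, p w would induce a 2K_2 inside
     two colour classes.  Hence n <= j(j-1).
   - Upper bound: if n <= k(k-1), there are at least n/2 pairs a < b of
     colours; colour the i-th edge {2i, 2i+1} by the i-th such pair.  Two
     colour classes contain both ends of at most one edge, so no induced 2K_2.
   Both graphs are "matching graphs" (x ~ y iff x <> y and x/2 = y/2), so
   induced copies are maps that are injective and respect halving.
   Finally, k(k-1) < n <= (k+1)k is equivalent to
   k < sqrt(n + 1/4) + 1/2 <= k+1, which gives the closed form. *)

(* Injective maps which preserve "having the same half" preserve the
   matching relation; 2K_2 is itself the matching graph on 'I_4. *)
Lemma matching_graph_morph (m p : nat) (f : 'I_m -> 'I_p) :
  injective f ->
  (forall x y, ((f x)./2 == (f y)./2) = ((nat_of_ord x)./2 == (nat_of_ord y)./2)) ->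
  forall x y, matching_graph p (f x) (f y) = matching_graph m x y.
Proof. by move=> finj fhalf x y; rewrite /matching_graph (inj_eq finj) fhalf. Qed.

Definition offdiag (T : finType) : {set T * T} := [set x | x.1 != x.2].

Lemma card_offdiag (T : finType) : #|offdiag T| = #|T| * #|T|.-1.
Proof.
have diagE : ~: offdiag T = [set (a, a) | a : T].
  apply/setP => -[a b]; rewrite !inE negbK /=.
  apply/eqP/imsetP => [-> | [a' _ [-> ->]]] //; by exists b.
have := cardsC (offdiag T); rewrite diagE card_imset; last by move=> a b [].
rewrite card_prod; case: #|T| => [|t] /=; lia.
Qed.

Definition increasing_pairs (k : nat) : {set 'I_k * 'I_k} :=
  [set x | nat_of_ord x.1 < nat_of_ord x.2].

Lemma card_increasing_pairs (k : nat) :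
  #|increasing_pairs k| * 2 = k * k.-1.
Proof.
have swap_inj : injective (fun x : 'I_k * 'I_k => (x.2, x.1)).
  by move=> [a b] [c d] [-> ->].
have inc_sub : increasing_pairs k \subset offdiag _.
  apply/subsetP => -[a b]; rewrite !inE /= -(inj_eq val_inj) /=; lia.
have dec_eq : offdiag _ :\: increasing_pairs k =
              [set (x.2, x.1) | x in increasing_pairs k].
  apply/setP => -[a b]; rewrite !inE /=.
  apply/andP/imsetP => [[ab ba] | [[a' b'] + [-> ->]]].
    exists (b, a) => //; rewrite inE /=; move: ab ba; rewrite -(inj_eq val_inj) /=; lia.
  by rewrite inE /= -(inj_eq val_inj) /=; lia.
have := cardsID (increasing_pairs k) (offdiag _).
rewrite (setIidPr inc_sub) dec_eq (card_imset _ swap_inj) card_offdiag card_ord.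
by rewrite muln2 -addnn.
Qed.

Lemma increasing_pair_eq (k : nat) (x y : 'I_k * 'I_k) (c1 c2 : 'I_k) :
  x \in increasing_pairs k -> y \in increasing_pairs k ->
  (x.1 == c1) || (x.1 == c2) -> (x.2 == c1) || (x.2 == c2) ->
  (y.1 == c1) || (y.1 == c2) -> (y.2 == c1) || (y.2 == c2) -> x = y.
Proof.
case: x y => [a b] [d e]; rewrite !inE /= => ab de.
rewrite -!(inj_eq (@ord_inj k)) => a12 b12 d12 e12.
by congr pair; apply: ord_inj; lia.
Qed.

Lemma ceil_eq_succ (R : realType) (x : R) (k : nat) :
  (k%:R < x <= k.+1%:R)%R -> (Num.ceil x = k.+1%:Z)%R.
Proof.
move=> /andP [kx xk]; apply/eqP; rewrite eq_le ceil_le_int xk /=.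
by rewrite -addn1 PoszD lezD1 ceil_gt_int.
Qed.

Lemma ceil_sqrt_bound (R : realType) (n k : nat) :
  (k * k.-1 < n)%N -> (n <= k.+1 * k)%N ->
  (Num.ceil (Num.sqrt (n%:R + 1 / 4 : R) + 1 / 2) = k.+1%:Z)%R.
Proof.
move=> lo hi; apply: ceil_eq_succ.
have k0 : (0 <= k%:R :> R)%R by [].
have n0 : (0 <= n%:R :> R)%R by [].
have lo' : ((k%:R * (k%:R - 1) : R) < n%:R)%R.
  case: k lo {hi k0} => [|k] lo; first by rewrite mul0r ltr0n; lia.
  by rewrite -natr1 addrK natr1 -natrM ltr_nat.
have hi' : (n%:R <= (k%:R + 1) * k%:R :> R)%R by rewrite natr1 -natrM ler_nat.
have s0 := sqrtr_ge0 (n%:R + 1 / 4 : R).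
have s2 : (Num.sqrt (n%:R + 1 / 4 : R) ^+ 2 = n%:R + 1 / 4)%R.
  by apply: sqr_sqrtr; lra.
rewrite -[(k.+1%:R)%R]natr1; apply/andP; split; nra.
Qed.

Section PerfectMatching.
Variables (n : nat) (n_even : ~~ odd n).

Definition partner_nat (v : nat) : nat := if odd v then v.-1 else v.+1.

(* Partners stay in 'I_n because n is even. *)
Lemma partner_nat_lt (v : 'I_n) : partner_nat v < n.
Proof. have := ltn_ord v; rewrite /partner_nat; case: ifP => ho; lia. Qed.

Definition partner (v : 'I_n) : 'I_n := Ordinal (partner_nat_lt v).

Lemma half_partner (v : 'I_n) : (nat_of_ord (partner v))./2 = (nat_of_ord v)./2.
Proof. rewrite /= /partner_nat; case: ifP => ho; lia. Qed.

Lemma odd_partner (v : 'I_n) : odd (partner v) = ~~ odd v.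
Proof. rewrite /= /partner_nat; case ho: (odd v) => /=; lia. Qed.

Lemma partner_neq (v : 'I_n) : partner v != v.
Proof. by apply/negP => /eqP/(congr1 (odd \o val)) /=; rewrite odd_partner; case: odd. Qed.

Lemma matching_graph_partner (x y : 'I_n) :
  matching_graph n x y = (y == partner x).
Proof.
rewrite /matching_graph -!(inj_eq val_inj) /= /partner_nat.
case: ifP => ho; apply/idP/idP => [/andP [h1 /eqP h2] | /eqP h];
  try (apply/eqP; lia); apply/andP; split; apply/eqP; lia.
Qed.

Lemma disjoint_edges_copy (v w : 'I_n) (S : pred 'I_n) :
  (nat_of_ord v)./2 != (nat_of_ord w)./2 ->
  S v -> S (partner v) -> S w -> S (partner w) ->
  has_induced_copy twoK2 (matching_graph n) S.
Proof.
move=> vw Sv Spv Sw Spw.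
pose base (x : 'I_4) := if (nat_of_ord x)./2 == 0 then v else w.
pose f (x : 'I_4) := if odd x then partner (base x) else base x.
have fhalf x y : ((nat_of_ord (f x))./2 == (nat_of_ord (f y))./2) =
                 ((nat_of_ord x)./2 == (nat_of_ord y)./2).
  have half_f z : (nat_of_ord (f z))./2 = (nat_of_ord (base z))./2.
    by rewrite /f; case: odd; rewrite ?half_partner.
  rewrite !half_f /base; move/eqP: vw; have := ltn_ord x; have := ltn_ord y.
  by case: ifP => ?; case: ifP => ? *; apply/eqP/eqP; lia.
have finj : injective f.
  move=> x y fxy.
  have /eqP hxy : (nat_of_ord x)./2 == (nat_of_ord y)./2 by rewrite -fhalf fxy.
  have bxy : base x = base y by rewrite /base hxy.
  have oxy : odd x = odd y.
    move: fxy; rewrite /f bxy; case: (odd x); case: (odd y) => //.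
    - by move=> e; move: (partner_neq (base y)); rewrite e eqxx.
    - by move=> /esym e; move: (partner_neq (base y)); rewrite e eqxx.
  (* an element of 'I_4 is determined by its half and its parity *)
  apply: (@ord_inj 4).
  by rewrite -[nat_of_ord x]odd_double_half -[nat_of_ord y]odd_double_half oxy hxy.
exists f; split; first exact: finj.
split; last exact: matching_graph_morph.
by move=> x; rewrite /f /base; do 2 case: ifP.
Qed.

Definition colour_pair (k : nat) (c : 'I_n -> 'I_k) (v : 'I_n) : 'I_k * 'I_k :=
  (c v, c (partner v)).

Lemma colour_pair_inj (k : nat) (c : 'I_n -> 'I_k) :
  H_avoiding_coloring twoK2 (matching_graph n) c -> injective (colour_pair c).
Proof.
move=> [proper avoid] v w [cvw cpvw]; apply/eqP/negPn/negP => vw.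
have [hvw | nhvw] := eqVneq (nat_of_ord v)./2 (nat_of_ord w)./2.
  (* v and w lie on the same edge, so they are partners of equal colour *)
  have wp : w = partner v.
    apply/eqP; rewrite -matching_graph_partner /matching_graph vw.
    by rewrite hvw eqxx.
  by move: (proper v w); rewrite matching_graph_partner wp eqxx -wp cvw eqxx => /(_ isT).
apply: (avoid (c v) (c (partner v))).
apply: (@disjoint_edges_copy v w (fun u => (c u == c v) || (c u == c (partner v))) nhvw);
  by rewrite ?eqxx ?orbT // -?cvw -?cpvw ?eqxx ?orbT.
Qed.

(* Lower bound: the colour pairs are distinct off-diagonal pairs. *)
Lemma lower_bound (j : nat) (c : 'I_n -> 'I_j) :
  H_avoiding_coloring twoK2 (matching_graph n) c -> n <= j * j.-1.
Proof.
move=> Hc; have proper := Hc.1.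
have : #|[set colour_pair c v | v : 'I_n]| <= #|offdiag 'I_j|.
  apply: subset_leq_card; apply/subsetP => _ /imsetP [v _ ->].
  by rewrite inE; apply: proper; rewrite matching_graph_partner eqxx.
by rewrite (card_imset _ (@colour_pair_inj j c Hc)) card_offdiag !card_ord.
Qed.

Section Construction.
Variables (k : nat) (x0 : 'I_k * 'I_k) (enough_pairs : n <= k * k.-1).

Definition edge_colours (v : 'I_n) : 'I_k * 'I_k :=
  nth x0 (enum (increasing_pairs k)) (nat_of_ord v)./2.

Definition pair_colouring (v : 'I_n) : 'I_k :=
  if odd v then (edge_colours v).2 else (edge_colours v).1.

Lemma edge_index_lt (v : 'I_n) : (nat_of_ord v)./2 < size (enum (increasing_pairs k)).
Proof.
rewrite -cardE; have := card_increasing_pairs k; have := ltn_ord v; lia.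
Qed.

Lemma edge_colours_increasing (v : 'I_n) : edge_colours v \in increasing_pairs k.
Proof. by rewrite -mem_enum mem_nth ?edge_index_lt. Qed.

Lemma edge_colours_partner (v : 'I_n) : edge_colours (partner v) = edge_colours v.
Proof. by rewrite /edge_colours half_partner. Qed.

Lemma pair_colouring_avoiding :
  H_avoiding_coloring twoK2 (matching_graph n) pair_colouring.
Proof.
have c_partner v : pair_colouring (partner v) =
    if odd v then (edge_colours v).1 else (edge_colours v).2.
  by rewrite /pair_colouring edge_colours_partner odd_partner; case: odd.
split.
  move=> v w; rewrite matching_graph_partner => /eqP ->; rewrite c_partner.
  have := edge_colours_increasing v; rewrite /pair_colouring inE.
  by case: odd; rewrite -(inj_eq val_inj) /=; lia.
move=> c1 c2 [f [finj [fS fG]]].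
(* both edges of the copy carry the colour pair {c1, c2}, so they coincide *)
pose S v := (pair_colouring v == c1) || (pair_colouring v == c2).
have edge_in_classes v : S v -> S (partner v) ->
    [&& ((edge_colours v).1 == c1) || ((edge_colours v).1 == c2)
      & ((edge_colours v).2 == c1) || ((edge_colours v).2 == c2)].
  by rewrite /S c_partner /pair_colouring; case: odd => -> ->.
have f_partner (x y : 'I_4) : twoK2 x y -> f y = partner (f x).
  by rewrite -fG matching_graph_partner => /eqP.
pose o (i : nat) (lt_i4 : i < 4) : 'I_4 := Ordinal lt_i4.
have [e01 e23] : f (o 1 isT) = partner (f (o 0 isT)) /\
                 f (o 3 isT) = partner (f (o 2 isT)) by split; apply: f_partner.
have S_p0 : S (partner (f (o 0 isT))) by rewrite -e01; apply: fS.
have S_p2 : S (partner (f (o 2 isT))) by rewrite -e23; apply: fS.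
have /andP [a1 a2] := edge_in_classes _ (fS (o 0 isT)) S_p0.
have /andP [b1 b2] := edge_in_classes _ (fS (o 2 isT)) S_p2.
have same_edge := increasing_pair_eq (edge_colours_increasing _)
  (edge_colours_increasing _) a1 a2 b1 b2.
move/eqP: same_edge; rewrite nth_uniq ?edge_index_lt ?enum_uniq // => same_half.
(* so f 0 and f 2 are distinct ends of one edge, yet 0 and 2 are not adjacent *)
have := fG (o 0 isT) (o 2 isT).
by rewrite /matching_graph (inj_eq finj) same_half.
Qed.

End Construction.

Lemma upper_bound (k : nat) : 0 < n -> n <= k * k.-1 ->
  exists c : 'I_n -> 'I_k, H_avoiding_coloring twoK2 (matching_graph n) c.
Proof.
case: k => [|k] n_pos enough; first by lia.
by exists (pair_colouring (ord0, ord0)); apply: pair_colouring_avoiding.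
Qed.

End PerfectMatching.

Theorem corollary3 (R : realType) (n : nat) :
  0 < n -> ~~ odd n ->
  exists k : nat,
    chi_H_is twoK2 (matching_graph n) k /\
    (k%:Z = Num.ceil (Num.sqrt (n%:R + 1 / 4 : R) + 1 / 2))%R.
Proof.
move=> n_pos n_even.
have ex_k : exists k, n <= k * k.-1 by exists n.+1; rewrite mulSn leq_addr.
case: (ex_minnP ex_k) => k enough k_min.
exists k; split.
  split; first exact: upper_bound.
  by move=> j [c Hc]; apply/k_min/(lower_bound n_even Hc).
case: k enough k_min => [|k] enough k_min; first by lia.
have below : k * k.-1 < n by rewrite ltnNge; apply/negP => /k_min; lia.
by rewrite (ceil_sqrt_bound _ below enough).
Qed.
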